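(* Let $V$, $P$, $\overline H_h(P)$ and $\hat H_h^N$ be as in the context. Then for every integer $N\ge0$, $|\overline H_h(P)-\hat H_h^N|=O(h^{N+1})$ as $h\to0$.
   Context: $\mathbb{T}=\mathbb{R}/\mathbb{Z}\cong[-\tfrac12,\tfrac12)$. $V:\mathbb{T}\to\mathbb{R}$ is smooth, symmetric, with a unique non-degenerate minimum at $0$. $\overline H(P)$ is the effective Hamiltonian: the unique constant $c$ for which $\tfrac12(P+\phi')^2+V=c$ has a periodic viscosity solution; $P_{crit}=\inf\{P:\overline H(P)>\min\overline H\}$, and $P>P_{crit}$ is fixed, so that $\overline H(P)>\max V$. For $h>0$, $\overline H_h(P)$ is the unique constant for which $-\tfrac h2v''+\tfrac12(P+v')^2+V=\overline H_h(P)$ has a periodic solution $v=v_h$. Put $p^+(x)=\sqrt{2(\overline H(P)-V(x))}>0$ and $\sigma_0=c/p^+$ with $\int_{\mathbb{T}}\sigma_0=1$. Define $\overline H_0=\overline H(P)$, $v_0(x)=\int_{-1/2}^x p^+(s)ds-P(x+\tfrac12)$, and inductively for $j\ge1$: $\overline H_j=\int_{\mathbb{T}}\big[-\tfrac12 v_{j-1}''+\tfrac12\sum_{i=1}^{j-1}v_i'v_{j-i}'\big]\sigma_0\,dx$, and $v_j$ a smooth periodic solution (unique up to additive constant) of $-\tfrac12v_{j-1}''+p^+v_j'+\tfrac12\sum_{i=1}^{j-1}v_i'v_{j-i}'=\overline H_j$. Set $\hat H_h^N=\sum_{j=0}^N h^j\overline H_j$. *)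

From Stdlib Require Import Reals Lra List.
From Coquelicot Require Import Coquelicot.
Import ListNotations.
Open Scope R_scope.

(* 1-periodic functions on R = functions on the torus T = R/Z. *)
Definition periodic1 (f : R -> R) : Prop := forall x, f (x + 1) = f x.

Definition smooth (f : R -> R) : Prop := forall (n : nat) (x : R), ex_derive_n f n x.

Definition C1 (f : R -> R) : Prop :=
  (forall x, ex_derive f x) /\ (forall x, continuous (Derive f) x).

Definition twice_diff (f : R -> R) : Prop :=
  forall x, ex_derive f x /\ ex_derive (Derive f) x.

Definition admissible_potential (V : R -> R) : Prop :=
  smooth V /\ periodic1 V /\ (forall x, V (- x) = V x) /\
  (forall x, -1/2 <= x < 1/2 -> x <> 0 -> V 0 < V x) /\
  Derive_n V 2 0 > 0.

Definition local_max_at (g : R -> R) (x0 : R) : Prop :=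
  exists eps, eps > 0 /\ forall y, Rabs (y - x0) < eps -> g y <= g x0.
Definition local_min_at (g : R -> R) (x0 : R) : Prop :=
  exists eps, eps > 0 /\ forall y, Rabs (y - x0) < eps -> g x0 <= g y.

Definition visc_solution (V : R -> R) (P c : R) (phi : R -> R) : Prop :=
  (forall x, continuous phi x) /\
  (forall psi x0, C1 psi -> local_max_at (fun y => phi y - psi y) x0 ->
     1/2 * (P + Derive psi x0) ^ 2 + V x0 <= c) /\
  (forall psi x0, C1 psi -> local_min_at (fun y => phi y - psi y) x0 ->
     1/2 * (P + Derive psi x0) ^ 2 + V x0 >= c).

(* c is the effective Hamiltonian value at P: the equation admits a periodic
   viscosity solution (such c is unique). *)
Definition is_eff_ham (V : R -> R) (P c : R) : Prop :=
  exists phi, periodic1 phi /\ visc_solution V P c phi.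

Definition is_visc_eff_ham (V : R -> R) (P h c : R) : Prop :=
  exists v, periodic1 v /\ twice_diff v /\
    forall x, - h / 2 * Derive_n v 2 x + 1/2 * (P + Derive v x) ^ 2 + V x = c.

Definition min_Hbar (Hbar : R -> R) : Rbar := Glb_Rbar (fun y => exists P', y = Hbar P').

Definition P_crit (Hbar : R -> R) : Rbar :=
  Glb_Rbar (fun P' => 0 <= P' /\ Rbar_lt (min_Hbar Hbar) (Finite (Hbar P'))).

Definition pplus (V : R -> R) (HP : R) (x : R) : R := sqrt (2 * (HP - V x)).

Definition sigma0 (V : R -> R) (HP : R) (x : R) : R :=
  (/ RInt (fun s => / pplus V HP s) (-1/2) (1/2)) / pplus V HP x.

Definition cross_sum (v : nat -> R -> R) (j : nat) (x : R) : R :=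
  fold_right Rplus 0
    (map (fun i => Derive (v i) x * Derive (v (j - i)%nat) x) (seq 1 (j - 1))).

Definition expansion_data (V : R -> R) (P HP : R)
    (Hj : nat -> R) (v : nat -> R -> R) : Prop :=
  Hj 0%nat = HP /\
  (forall x, v 0%nat x = RInt (pplus V HP) (-1/2) x - P * (x + 1/2)) /\
  forall j : nat, (1 <= j)%nat ->
    Hj j = RInt (fun x => (- 1/2 * Derive_n (v (j - 1)%nat) 2 x
                           + 1/2 * cross_sum v j x) * sigma0 V HP x) (-1/2) (1/2) /\
    smooth (v j) /\ periodic1 (v j) /\
    forall x, - 1/2 * Derive_n (v (j - 1)%nat) 2 x + pplus V HP x * Derive (v j) x
              + 1/2 * cross_sum v j x = Hj j.

Definition Hhat (Hj : nat -> R) (h : R) (N : nat) : R :=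
  sum_f_R0 (fun j => h ^ j * Hj j) N.

(* Since P > P_crit, testing the viscosity solutions with primitives of suitable
   densities shows Hbar(P) > max V and that p^+ has mean P.  The recursion for
   (Hbar_j, v_j) is exactly the statement that U = sum_{j <= N} h^j v_j solves the
   viscous cell problem at level Hhat_h^N up to a residual of size O(h^(N+1)); for
   small h, P + U' stays close to p^+ > 0.  Comparing U with the exact corrector
   v_h at the extrema of v_h' - U', where their second derivatives agree, bounds
   |Hbar_h(P) - Hhat_h^N| by the size of that residual. *)

From Stdlib Require Import Reals Lra Lia List ZArith Classical.
From Coquelicot Require Import Coquelicot.
(* Imported last: [Stdlib.Reals] also exports a constant named [C1]. *)
Open Scope R_scope.

Fixpoint psum (f : nat -> R) (n : nat) : R :=
  match n with O => 0 | S n => psum f n + f n end.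

Lemma psum_ext f g n : (forall k, (k < n)%nat -> f k = g k) -> psum f n = psum g n.
Proof.
  induction n as [|n IH]; intros Hfg; simpl; auto.
  rewrite IH by (intros k Hk; apply Hfg; lia). rewrite Hfg by lia. reflexivity.
Qed.

Lemma psum_shift f n : psum f (S n) = f O + psum (fun k => f (S k)) n.
Proof.
  induction n as [|n IH]; [simpl; ring|].
  change (psum f (S (S n))) with (psum f (S n) + f (S n)). rewrite IH. simpl. ring.
Qed.

Lemma psum_plus f g n : psum (fun k => f k + g k) n = psum f n + psum g n.
Proof. induction n; simpl; [ring | rewrite IHn; ring]. Qed.

Lemma psum_minus f g n : psum (fun k => f k - g k) n = psum f n - psum g n.
Proof. induction n; simpl; [ring | rewrite IHn; ring]. Qed.

Lemma psum_scal c f n : psum (fun k => c * f k) n = c * psum f n.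
Proof. induction n; simpl; [ring | rewrite IHn; ring]. Qed.

Lemma sum_f_R0_psum f N : sum_f_R0 f N = psum f (S N).
Proof. induction N; simpl; [ring | rewrite IHN; simpl; ring]. Qed.

Lemma fold_right_seq_psum (f : nat -> R) s n :
  fold_right Rplus 0 (map f (seq s n)) = psum (fun k => f (s + k)%nat) n.
Proof.
  revert s; induction n as [|n IH]; intros s; [reflexivity|].
  rewrite psum_shift; simpl. rewrite IH, Nat.add_0_r. f_equal.
  apply psum_ext; intros; f_equal; lia.
Qed.

Lemma psum_abs_le f n c : (forall k, (k < n)%nat -> Rabs (f k) <= c) -> Rabs (psum f n) <= INR n * c.
Proof.
  induction n as [|n IH]; intros Hf; simpl psum.
  - rewrite Rabs_R0; simpl; lra.
  - rewrite S_INR. eapply Rle_trans; [apply Rabs_triang|].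
    assert (Rabs (psum f n) <= INR n * c) by (apply IH; intros; apply Hf; lia).
    assert (Rabs (f n) <= c) by (apply Hf; lia). lra.
Qed.

Lemma is_derive_psum (f : nat -> R -> R) (df : nat -> R) n x :
  (forall j, is_derive (f j) x (df j)) ->
  is_derive (fun y => psum (fun j => f j y) n) x (psum df n).
Proof.
  intros Hf; induction n as [|n IH]; simpl.
  - exact (@is_derive_const R_AbsRing R_NormedModule 0 x).
  - apply (is_derive_plus (fun y => psum (fun j => f j y) n) (f n)); auto.
Qed.

Lemma is_derive_continuous (f : R -> R) x l : is_derive f x l -> continuous f x.
Proof. intros Hf; apply (@ex_derive_continuous R_AbsRing R_NormedModule); exists l; exact Hf. Qed.

Lemma continuous_eps_delta (f : R -> R) x : continuous f x ->
  forall eps, 0 < eps -> exists d, 0 < d /\ forall y, Rabs (y - x) < d -> Rabs (f y - f x) < eps.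
Proof.
  intros Hc eps He.
  destruct (Hc (ball (f x) eps) (locally_ball (f x) (mkposreal eps He))) as [d Hd].
  exists d; split; [apply cond_pos | intros y Hy; apply Hd, Hy].
Qed.

Lemma periodic_add_nat f n x : periodic1 f -> f (x + INR n) = f x.
Proof.
  intros Hp; induction n as [|n IH]; [simpl; rewrite Rplus_0_r; auto|].
  rewrite S_INR, <- Rplus_assoc, Hp; auto.
Qed.

Lemma periodic_add_Z f (z : Z) x : periodic1 f -> f (x + IZR z) = f x.
Proof.
  intros Hp. destruct (Z_le_gt_dec 0 z) as [Hz|Hz].
  - rewrite <- (Z2Nat.id z Hz), <- INR_IZR_INZ. apply periodic_add_nat, Hp.
  - replace z with (- Z.of_nat (Z.to_nat (- z)))%Z by lia.
    rewrite opp_IZR, <- INR_IZR_INZ.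
    rewrite <- (periodic_add_nat f (Z.to_nat (- z)) (x + - INR (Z.to_nat (- z))) Hp).
    f_equal; ring.
Qed.

Lemma periodic_reduce f x : periodic1 f -> exists y, 0 <= y <= 1 /\ f x = f y.
Proof.
  intros Hp. destruct (archimed x) as [H1 H2].
  exists (x + IZR (1 - up x)). rewrite periodic_add_Z by exact Hp.
  rewrite minus_IZR. split; [lra | auto].
Qed.

Lemma periodic_attains_min f : periodic1 f -> (forall x, continuous f x) ->
  exists m, forall x, f m <= f x.
Proof.
  intros Hp Hc. destruct (continuity_ab_min f 0 1) as [m [Hm _]];
    [lra | intros; apply continuity_pt_filterlim, Hc |].
  exists m. intros x. destruct (periodic_reduce f x Hp) as [y [Hy ->]]. auto.
Qed.

Lemma periodic_attains_max f : periodic1 f -> (forall x, continuous f x) ->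
  exists m, forall x, f x <= f m.
Proof.
  intros Hp Hc. destruct (continuity_ab_maj f 0 1) as [m [Hm _]];
    [lra | intros; apply continuity_pt_filterlim, Hc |].
  exists m. intros x. destruct (periodic_reduce f x Hp) as [y [Hy ->]]. auto.
Qed.

Lemma periodic_bounded f : periodic1 f -> (forall x, continuous f x) ->
  exists B, 0 <= B /\ forall x, Rabs (f x) <= B.
Proof.
  intros Hp Hc. destruct (periodic_attains_min f Hp Hc) as [m Hm].
  destruct (periodic_attains_max f Hp Hc) as [M HM].
  exists (Rmax (Rabs (f m)) (Rabs (f M))). split.
  - eapply Rle_trans; [apply Rabs_pos | apply Rmax_l].
  - intros x. specialize (Hm x); specialize (HM x).
    apply Rabs_le_between. pose proof (Rmax_l (Rabs (f m)) (Rabs (f M))).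
    pose proof (Rmax_r (Rabs (f m)) (Rabs (f M))).
    pose proof (Rle_abs (f M)). pose proof (Rle_abs (- f m)). rewrite Rabs_Ropp in *. lra.
Qed.

Lemma periodic_Derive f : periodic1 f -> periodic1 (Derive f).
Proof.
  intros Hp x. unfold Derive. f_equal. apply Lim_ext. intros y.
  replace (x + 1 + y) with ((x + y) + 1) by ring. rewrite !Hp. auto.
Qed.

Lemma is_derive_at_min f x l : is_derive f x l -> (forall y, f x <= f y) -> l = 0.
Proof.
  intros Hd Hm. apply is_derive_Reals in Hd.
  rewrite <- (derive_pt_eq_0 f x l (exist _ l Hd) Hd).
  apply (deriv_minimum f (x - 1) (x + 1)); [lra | lra | auto].
Qed.

Lemma is_derive_at_max f x l : is_derive f x l -> (forall y, f y <= f x) -> l = 0.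
Proof.
  intros Hd Hm. apply is_derive_Reals in Hd.
  rewrite <- (derive_pt_eq_0 f x l (exist _ l Hd) Hd).
  apply (deriv_maximum f (x - 1) (x + 1)); [lra | lra | auto].
Qed.

Lemma periodic_critical_point f df : periodic1 f -> (forall x, is_derive f x (df x)) ->
  exists x, df x = 0.
Proof.
  intros Hp Hd. destruct (periodic_attains_max f Hp) as [m Hm].
  - intros x; exact (is_derive_continuous f x _ (Hd x)).
  - exists m; exact (is_derive_at_max f m _ (Hd m) Hm).
Qed.

Lemma derive_nonneg_at_upcrossing g s l e : is_derive g s l -> g s = 0 -> 0 < e ->
  (forall u, s - e < u < s -> g u < 0) -> 0 <= l.
Proof.
  intros Hd Hs He Hneg. apply Rnot_lt_le; intros Hl.
  apply is_derive_Reals in Hd. destruct (Hd (- l / 2)) as [[del Hdel] Hq]; [lra|].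
  set (t := Rmin (del / 2) (e / 2)).
  assert (Ht : 0 < t /\ t <= del / 2 /\ t <= e / 2)
    by (unfold t; repeat split; [apply Rmin_glb_lt; lra | apply Rmin_l | apply Rmin_r]).
  specialize (Hq (- t)). rewrite Hs, Rminus_0_r, Rabs_Ropp, Rabs_right in Hq by lra.
  specialize (Hq ltac:(lra) ltac:(simpl; lra)).
  assert (Hgt : g (s + - t) < 0) by (apply Hneg; lra).
  assert (0 < g (s + - t) / - t) by (apply Rdiv_neg_neg; lra).
  apply Rabs_lt_between in Hq. lra.
Qed.

(* The last point s of [a, b] before which g stays negative. *)
Lemma upward_zero_crossing (g : R -> R) a b : (forall x, continuous g x) ->
  a < b -> g a < 0 -> 0 < g b ->
  exists s, g s = 0 /\ forall l, is_derive g s l -> 0 <= l.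
Proof.
  intros Hc Hab Ha Hb.
  set (E := fun t => a <= t <= b /\ forall u, a <= u <= t -> g u < 0).
  assert (Ea : E a) by (split; [lra | intros u Hu; replace u with a by lra; exact Ha]).
  destruct (completeness E) as [s [Hub Hlub]].
  { exists b. intros t [Ht _]. lra. }
  { exists a. exact Ea. }
  assert (Has : a <= s) by (apply Hub, Ea).
  assert (Hsb : s <= b) by (apply Hlub; intros t [Ht _]; lra).
  assert (Hbefore : forall u, a <= u < s -> g u < 0).
  { intros u Hu. destruct (classic (exists t, E t /\ u < t)) as [[t [[_ Hg] Hut]] | Hn].
    - apply Hg; lra.
    - assert (s <= u); [|lra]. apply Hlub. intros t Et.
      apply Rnot_lt_le. intros Hut. apply Hn. exists t; auto. }
  assert (Hs0 : g s = 0).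
  { destruct (Rtotal_order (g s) 0) as [Hneg | [Hz | Hpos]]; auto; exfalso.
    - destruct (continuous_eps_delta g s (Hc s) (- g s)) as [d [Hd Hnear]]; [lra|].
      assert (s < b) by (destruct (Req_dec s b); [subst; lra | lra]).
      set (t := Rmin (s + d / 2) b).
      assert (Ht : s < t <= s + d / 2 /\ t <= b)
        by (unfold t; repeat split; [apply Rmin_glb_lt; lra | apply Rmin_l | apply Rmin_r]).
      assert (Et : E t); [| specialize (Hub t Et); lra].
      split; [lra|]. intros u Hu. destruct (Rlt_dec u s); [apply Hbefore; lra|].
      assert (Hgu : Rabs (g u - g s) < - g s) by (apply Hnear; rewrite Rabs_right; lra).
      apply Rabs_lt_between in Hgu. lra.
    - destruct (continuous_eps_delta g s (Hc s) (g s)) as [d [Hd Hnear]]; [lra|].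
      assert (a < s) by (destruct (Req_dec a s); [subst; lra | lra]).
      set (u := Rmax a (s - d / 2)).
      assert (Hu : a <= u < s /\ s - d / 2 <= u)
        by (unfold u; repeat split; [apply Rmax_l | apply Rmax_lub_lt; lra | apply Rmax_r]).
      assert (Hgu : Rabs (g u - g s) < g s) by (apply Hnear; rewrite Rabs_left; lra).
      apply Rabs_lt_between in Hgu. specialize (Hbefore u). lra. }
  exists s. split; [exact Hs0|]. intros l Hl.
  assert (a < s) by (destruct (Req_dec a s); [subst; lra | lra]).
  apply (derive_nonneg_at_upcrossing g s l (s - a)); auto; [lra|].
  intros u Hu. apply Hbefore. lra.
Qed.

(* A zero s of w forces w' s < 0 when V < c, so w can never cross 0 upwards;
   by periodicity w cannot become negative once it is positive somewhere. *)
Lemma riccati_solution_pos (V : R -> R) (h c : R) (w dw : R -> R) :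
  0 < h -> periodic1 w -> (forall x, is_derive w x (dw x)) ->
  (forall x, - h / 2 * dw x + 1/2 * w x ^ 2 + V x = c) -> (forall x, V x < c) ->
  (exists z, 0 < w z) -> forall x, 0 < w x.
Proof.
  intros Hh Hp Hd Heq HV [z Hz].
  assert (Hc : forall x, continuous w x) by (intros x; exact (is_derive_continuous w x _ (Hd x))).
  assert (Hzero : forall s, w s = 0 -> dw s < 0).
  { intros s Hs. specialize (Heq s). specialize (HV s). rewrite Hs in Heq.
    apply Rnot_le_lt; intros Hdw. assert (0 <= h * dw s) by (apply Rmult_le_pos; lra). nra. }
  destruct (periodic_attains_min w Hp Hc) as [y Hy].
  destruct (Rtotal_order (w y) 0) as [Hneg | [Hy0 | Hpos]].
  - exfalso.
    destruct (periodic_reduce w y Hp) as [y' [Hy' Ey]].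
    destruct (periodic_reduce w z Hp) as [z' [Hz' Ez]].
    assert (Ez2 : w (z' + 1 + 1) = w z') by (rewrite !Hp; auto).
    destruct (upward_zero_crossing w y' (z' + 1 + 1) Hc) as [s [Hs Hds]]; try lra.
    specialize (Hds _ (Hd s)). specialize (Hzero s Hs). lra.
  - exfalso. specialize (Hzero y Hy0). rewrite (is_derive_at_min w y _ (Hd y) Hy) in Hzero. lra.
  - intros x. specialize (Hy x). lra.
Qed.

Lemma twice_diff_is_derive (u : R -> R) x : twice_diff u -> is_derive (Derive u) x (Derive_n u 2 x).
Proof. intros Hu. exact (Derive_correct (Derive u) x (proj2 (Hu x))). Qed.

(* Comparison of the cell problem at level c with an approximate solution at
   level C: at the extrema of (P + u') - (P + U') the second derivatives agree,
   and there the squares of the two gradients compare in the right direction. *)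
Lemma eff_ham_comparison (V : R -> R) (P h c C M : R) (u U : R -> R) :
  0 < h -> 0 < P -> periodic1 u -> periodic1 U -> twice_diff u -> twice_diff U ->
  (forall x, - h / 2 * Derive_n u 2 x + 1/2 * (P + Derive u x) ^ 2 + V x = c) ->
  (forall x, Rabs (- h / 2 * Derive_n U 2 x + 1/2 * (P + Derive U x) ^ 2 + V x - C) <= M) ->
  (forall x, 0 < P + Derive U x) -> (forall x, V x < C) ->
  Rabs (c - C) <= M.
Proof.
  intros Hh HP Hpu HpU Hu HU Eu EU HW HV.
  set (d := fun x => Derive u x - Derive U x).
  assert (Hd : forall x, is_derive d x (Derive_n u 2 x - Derive_n U 2 x))
    by (intros x; apply (is_derive_minus (Derive u) (Derive U)); apply twice_diff_is_derive; auto).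
  assert (Hdc : forall x, continuous d x) by (intros x; exact (is_derive_continuous d x _ (Hd x))).
  assert (Hdp : periodic1 d) by (intros x; unfold d; rewrite !periodic_Derive; auto).
  destruct (periodic_critical_point (fun x => u x - U x) d) as [x0 Hx0].
  { intros x; rewrite Hpu, HpU; auto. }
  { intros x; apply (is_derive_minus u U); apply Derive_correct; [apply Hu | apply HU]. }
  destruct (periodic_attains_min d Hdp Hdc) as [xm Hxm].
  destruct (periodic_attains_max d Hdp Hdc) as [xM HxM].
  pose proof (is_derive_at_min d xm _ (Hd xm) Hxm) as Hm.
  pose proof (is_derive_at_max d xM _ (Hd xM) HxM) as HM.
  assert (Hdm : d xm <= 0) by (specialize (Hxm x0); lra).
  assert (HdM : 0 <= d xM) by (specialize (HxM x0); lra).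
  unfold d in Hdm, HdM.
  pose proof (Eu xm) as Eum. pose proof (Eu xM) as EuM.
  pose proof (EU xm) as EUm. pose proof (EU xM) as EUM.
  rewrite Rabs_le_between in EUm, EUM.
  pose proof (HW xm). pose proof (HW xM).
  apply Rabs_le_between. split.
  - assert (0 <= (Derive u xM - Derive U xM) * (2 * P + Derive u xM + Derive U xM))
      by (apply Rmult_le_pos; lra).
    nra.
  - destruct (Rle_dec c C) as [HcC | HcC]; [lra|].
    assert (Hw : forall x, 0 < P + Derive u x).
    { apply (riccati_solution_pos V h c (fun x => P + Derive u x) (Derive_n u 2)); auto.
      - intros x; rewrite periodic_Derive; auto.
      - intros x. rewrite <- (Rplus_0_l (Derive_n u 2 x)).
        apply (is_derive_plus (fun _ => P) (Derive u));
          [apply (@is_derive_const R_AbsRing R_NormedModule) | apply twice_diff_is_derive, Hu].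
      - intros x; specialize (HV x); lra.
      - exists x0. assert (Derive u x0 = Derive U x0) by (unfold d in Hx0; lra).
        specialize (HW x0). lra. }
    specialize (Hw xm).
    assert ((Derive u xm - Derive U xm) * (2 * P + Derive u xm + Derive U xm) <= 0)
      by (apply Rmult_le_0_r; lra).
    nra.
Qed.

Lemma ex_RInt_cont (f : R -> R) a b : (forall x, continuous f x) -> ex_RInt f a b.
Proof. intros Hf; apply (@ex_RInt_continuous R_CompleteNormedModule); intros; apply Hf. Qed.

Lemma is_derive_RInt_upper (r : R -> R) x : (forall y, continuous r y) ->
  is_derive (fun t => RInt r (-1/2) t) x (r x).
Proof.
  intros Hr. apply (is_derive_RInt r _ (-1/2)); [|apply Hr].
  exists (mkposreal 1 Rlt_0_1). intros y _.
  apply (@RInt_correct R_CompleteNormedModule), ex_RInt_cont, Hr.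
Qed.

Lemma RInt_upper_add_period (r : R -> R) t : (forall y, continuous r y) -> periodic1 r ->
  RInt r (-1/2) (t + 1) = RInt r (-1/2) t + RInt r (-1/2) (1/2).
Proof.
  intros Hc Hp.
  rewrite <- (RInt_Chasles r (-1/2) (1/2) (t + 1)) by apply ex_RInt_cont, Hc.
  change (plus ?a ?b) with (a + b). rewrite Rplus_comm. f_equal.
  replace (1/2) with (1 * (-1/2) + 1) by field. replace (t + 1) with (1 * t + 1) by ring.
  rewrite <- RInt_comp_lin by apply ex_RInt_cont, Hc.
  apply RInt_ext. intros x _. change (scal 1 ?y) with (1 * y). rewrite !Rmult_1_l. apply Hp.
Qed.

Lemma C1_of_is_derive (psi dpsi : R -> R) : (forall x, is_derive psi x (dpsi x)) ->
  (forall x, continuous dpsi x) -> C1 psi /\ forall x, Derive psi x = dpsi x.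
Proof.
  intros Hd Hc. assert (E : forall x, Derive psi x = dpsi x) by (intros; apply is_derive_unique, Hd).
  split; [split|]; auto.
  - intros x; exists (dpsi x); apply Hd.
  - intros x. apply (continuous_ext dpsi); [intros y; rewrite E; reflexivity | apply Hc].
Qed.

(* Test the subsolution property with a steep parabola centred at x0: the
   maximum of phi - psi over [x0 - r, x0 + r] is interior, near x0. *)
Lemma visc_solution_potential_le (V : R -> R) P c (phi : R -> R) : (forall x, continuous V x) -> periodic1 phi ->
  visc_solution V P c phi -> forall x0, V x0 <= c.
Proof.
  intros HV Hp [Hcp [Hsub _]] x0. apply Rnot_lt_le. intros Hlt.
  destruct (continuous_eps_delta V x0 (HV x0) (V x0 - c)) as [d [Hd HVnear]]; [lra|].
  destruct (periodic_bounded phi Hp Hcp) as [B [HB0 HB]].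
  set (r := Rmin (d / 2) 1).
  assert (Hr : 0 < r <= d / 2) by (unfold r; split; [apply Rmin_glb_lt; lra | apply Rmin_l]).
  set (K := (2 * B + 1) / (r * r)).
  assert (HK : K * (r * r) = 2 * B + 1) by (unfold K; field; lra).
  set (psi := fun t => K * ((t - x0) * (t - x0))).
  assert (Hpsi : forall t, is_derive psi t (K * (2 * (t - x0))))
    by (intros t; unfold psi; auto_derive; [auto | ring]).
  destruct (C1_of_is_derive psi _ Hpsi) as [HC1 HDpsi].
  { intros t. apply (is_derive_continuous _ t (K * 2)). auto_derive; [auto | ring]. }
  destruct (continuity_ab_maj (fun t => phi t - psi t) (x0 - r) (x0 + r)) as [xM [HxM HxMr]]; [lra| |].
  { intros y _. apply continuity_pt_filterlim, (continuous_minus phi psi); [apply Hcp |].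
    exact (is_derive_continuous psi y _ (Hpsi y)). }
  assert (Hx0 := HxM x0 ltac:(lra)). unfold psi in Hx0.
  assert (H1 := HB xM). assert (H2 := HB x0). rewrite Rabs_le_between in H1, H2.
  assert (HxMx0 : Rabs (xM - x0) < r).
  { assert (Hsq : (xM - x0) * (xM - x0) < r * r).
    { apply Rnot_le_lt; intros Hge.
      assert (K * (r * r) <= K * ((xM - x0) * (xM - x0))) by (apply Rmult_le_compat_l; [|lra];
        unfold K; apply Rlt_le, Rdiv_lt_0_compat; nra).
      nra. }
    apply Rabs_lt_between; split; nra. }
  assert (Hloc : local_max_at (fun y => phi y - psi y) xM).
  { exists (r - Rabs (xM - x0)). split; [lra|]. intros y Hy. apply HxM.
    pose proof (Rle_abs (xM - x0)). pose proof (Rle_abs (- (xM - x0))). rewrite Rabs_Ropp in *.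
    apply Rabs_lt_between in Hy. lra. }
  specialize (Hsub psi xM HC1 Hloc).
  assert (Hc : c < V xM).
  { assert (Hnear : Rabs (V xM - V x0) < V x0 - c) by (apply HVnear; lra).
    apply Rabs_lt_between in Hnear. lra. }
  pose proof (pow2_ge_0 (P + Derive psi xM)). lra.
Qed.

(* phi + P t - a R(t), with R(t) = int_{-1/2}^t r and a = P / R(1/2), is periodic;
   testing at its maximum and minimum with a R(t) - P t gives P + psi' = a r. *)
Lemma visc_solution_test_primitive (V : R -> R) P c (phi r : R -> R) : periodic1 phi -> visc_solution V P c phi ->
  (forall x, continuous r x) -> periodic1 r -> RInt r (-1/2) (1/2) <> 0 ->
  (exists t, 1/2 * (P / RInt r (-1/2) (1/2) * r t) ^ 2 + V t <= c) /\
  (exists t, 1/2 * (P / RInt r (-1/2) (1/2) * r t) ^ 2 + V t >= c).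
Proof.
  intros Hp [Hcp [Hsub Hsup]] Hrc Hrp HI.
  set (I := RInt r (-1/2) (1/2)) in *. set (a := P / I).
  set (psi := fun t => a * RInt r (-1/2) t - P * t).
  assert (Hpsi : forall t, is_derive psi t (a * r t - P)).
  { intros t. apply (is_derive_minus (fun t => a * RInt r (-1/2) t) (fun t => P * t)).
    - apply is_derive_scal, is_derive_RInt_upper, Hrc.
    - auto_derive; [auto | ring]. }
  destruct (C1_of_is_derive psi _ Hpsi) as [HC1 HDpsi].
  { intros t. apply (continuous_minus (fun t => a * r t) (fun _ => P)).
    - apply (continuous_scal_r a r), Hrc.
    - apply continuous_const. }
  set (m := fun t => phi t - psi t).
  assert (Hmp : periodic1 m).
  { intros t. unfold m, psi. rewrite Hp, RInt_upper_add_period by auto. fold I.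
    unfold a. field. exact HI. }
  assert (Hmc : forall t, continuous m t).
  { intros t. apply (continuous_minus phi psi); [apply Hcp | exact (is_derive_continuous psi t _ (Hpsi t))]. }
  split.
  - destruct (periodic_attains_max m Hmp Hmc) as [t Ht]. exists t.
    assert (Hloc : local_max_at m t) by (exists 1; split; [lra | intros y _; apply Ht]).
    specialize (Hsub psi t HC1 Hloc). rewrite HDpsi in Hsub.
    replace (P + (a * r t - P)) with (a * r t) in Hsub by ring. exact Hsub.
  - destruct (periodic_attains_min m Hmp Hmc) as [t Ht]. exists t.
    assert (Hloc : local_min_at m t) by (exists 1; split; [lra | intros y _; apply Ht]).
    specialize (Hsup psi t HC1 Hloc). rewrite HDpsi in Hsup.
    replace (P + (a * r t - P)) with (a * r t) in Hsup by ring. exact Hsup.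
Qed.

Lemma smooth_continuous (f : R -> R) x : smooth f -> continuous f x.
Proof. intros Hf. apply (@ex_derive_continuous R_AbsRing R_NormedModule), (Hf 1%nat x). Qed.

Lemma pplus_continuous (V : R -> R) c x : (forall y, continuous V y) -> continuous (pplus V c) x.
Proof.
  intros HV. apply continuous_sqrt_comp.
  apply (continuous_scal_r 2 (fun y => c - V y)), (continuous_minus (fun _ => c) V);
    [apply continuous_const | apply HV].
Qed.

Lemma pplus_periodic (V : R -> R) c : periodic1 V -> periodic1 (pplus V c).
Proof. intros HV x; unfold pplus; rewrite HV; reflexivity. Qed.

Lemma pplus_sqr (V : R -> R) c x : V x <= c -> pplus V c x ^ 2 = 2 * (c - V x).
Proof. intros H; unfold pplus; rewrite <- Rsqr_pow2; apply Rsqr_sqrt; lra. Qed.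

Lemma pplus_pos (V : R -> R) c x : V x < c -> 0 < pplus V c x.
Proof. intros H; apply sqrt_lt_R0; lra. Qed.

Lemma RInt_add_const (f : R -> R) k : (forall x, continuous f x) ->
  RInt (fun x => f x + k) (-1/2) (1/2) = RInt f (-1/2) (1/2) + k.
Proof.
  intros Hf. rewrite (RInt_plus f (fun _ => k))
    by (apply ex_RInt_cont; intros; apply Hf || apply continuous_const).
  rewrite RInt_const. change (RInt f (-1/2) (1/2) + (1/2 - -1/2) * k = RInt f (-1/2) (1/2) + k). lra.
Qed.

Lemma sqr_gt_1_of_scaled (a I P : R) : 0 < I -> a * I = P -> I < Rabs P -> 1 < a ^ 2.
Proof.
  intros HI <- Hlt. rewrite Rabs_mult, (Rabs_right I) in Hlt by lra.
  rewrite <- pow2_abs. assert (1 < Rabs a) by nra. nra.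
Qed.

Lemma sqr_lt_1_of_scaled (a I P : R) : 0 < I -> a * I = P -> Rabs P < I -> a ^ 2 < 1.
Proof.
  intros HI <- Hlt. rewrite Rabs_mult, (Rabs_right I) in Hlt by lra.
  rewrite <- pow2_abs. pose proof (Rabs_pos a). assert (Rabs a < 1) by nra. nra.
Qed.

(* If the mean of p^+ were below |P|, the subsolution test with the slightly
   larger density p^+ + eps would demand a gradient exceeding p^+. *)
Lemma visc_solution_abs_le_RInt_pplus (V : R -> R) P c (phi : R -> R) :
  (forall x, continuous V x) -> periodic1 V -> periodic1 phi -> visc_solution V P c phi ->
  Rabs P <= RInt (pplus V c) (-1/2) (1/2).
Proof.
  intros HV HVp Hp Hv.
  pose proof (visc_solution_potential_le V P c phi HV Hp Hv) as Hle.
  assert (Hqc : forall x, continuous (pplus V c) x) by (intros; apply pplus_continuous, HV).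
  set (Iq := RInt (pplus V c) (-1/2) (1/2)).
  assert (HIq : 0 <= Iq) by (apply RInt_ge_0; [lra | apply ex_RInt_cont, Hqc | intros; apply sqrt_pos]).
  apply Rnot_lt_le. intros Hlt.
  set (eps := (Rabs P - Iq) / 2).
  set (r := fun x => pplus V c x + eps).
  assert (HIr : RInt r (-1/2) (1/2) = Iq + eps) by (apply RInt_add_const, Hqc).
  destruct (visc_solution_test_primitive V P c phi r Hp Hv) as [[t Ht] _].
  - intros x. apply (continuous_plus (pplus V c) (fun _ => eps)); [apply Hqc | apply continuous_const].
  - intros x. unfold r. rewrite pplus_periodic by exact HVp. reflexivity.
  - unfold eps in HIr. lra.
  - rewrite HIr in Ht.
    assert (Ha : 1 < (P / (Iq + eps)) ^ 2).
    { assert (0 < Iq + eps) by (unfold eps; lra).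
      apply (sqr_gt_1_of_scaled _ (Iq + eps) P); [lra | field; lra | unfold eps; lra]. }
    assert (0 < eps) by (unfold eps; lra).
    pose proof (pplus_sqr V c t (Hle t)).
    unfold r in Ht. rewrite Rpow_mult_distr in Ht.
    set (s := pplus V c t) in *. set (A := (P / (Iq + eps)) ^ 2) in *.
    assert (0 <= s) by apply sqrt_pos.
    assert (Hs : s ^ 2 < (s + eps) ^ 2) by nra.
    assert ((s + eps) ^ 2 < A * (s + eps) ^ 2) by nra.
    lra.
Qed.

(* Dually, with the supersolution test and the density p^+ itself. *)
Lemma visc_solution_RInt_pplus_le_abs (V : R -> R) P c (phi : R -> R) :
  (forall x, continuous V x) -> periodic1 V -> periodic1 phi -> visc_solution V P c phi ->
  (forall x, V x < c) -> RInt (pplus V c) (-1/2) (1/2) <= Rabs P.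
Proof.
  intros HV HVp Hp Hv Hlt.
  assert (Hqc : forall x, continuous (pplus V c) x) by (intros; apply pplus_continuous, HV).
  set (Iq := RInt (pplus V c) (-1/2) (1/2)).
  assert (HIq : 0 < Iq).
  { apply RInt_gt_0; [lra | intros; apply pplus_pos, Hlt | intros; apply Hqc]. }
  apply Rnot_lt_le. intros Hgt.
  destruct (visc_solution_test_primitive V P c phi (pplus V c) Hp Hv Hqc (pplus_periodic V c HVp))
    as [_ [t Ht]]; [fold Iq; lra|].
  fold Iq in Ht.
  assert (Ha : (P / Iq) ^ 2 < 1) by (apply (sqr_lt_1_of_scaled _ Iq P); [lra | field; lra | exact Hgt]).
  pose proof (pplus_sqr V c t (Rlt_le _ _ (Hlt t))). pose proof (pplus_pos V c t (Hlt t)).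
  rewrite Rpow_mult_distr in Ht.
  set (s := pplus V c t) in *. set (A := (P / Iq) ^ 2) in *.
  assert (0 < s ^ 2) by (apply pow_lt; lra).
  assert (A * s ^ 2 < s ^ 2) by nra.
  lra.
Qed.

Lemma Glb_Rbar_lt_witness (S : R -> Prop) x : Rbar_lt (Glb_Rbar S) (Finite x) -> exists y, S y /\ y < x.
Proof.
  intros H. apply NNPP. intros Hn.
  destruct (Glb_Rbar_correct S) as [_ Hglb].
  assert (Rbar_le (Finite x) (Glb_Rbar S)).
  { apply Hglb. intros y Sy. simpl. apply Rnot_lt_le. intros Hlt. apply Hn. eauto. }
  destruct (Glb_Rbar S); simpl in *; lra.
Qed.

(* P > P_crit gives 0 <= P1 < P with Hbar(P1) > min Hbar >= max V; the
   monotonicity of c |-> int p^+_c then forces Hbar(P) > Hbar(P1), and both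
   viscosity bounds apply at P. *)
Lemma supercritical_eff_ham (V Hbar : R -> R) P : admissible_potential V ->
  (forall P', is_eff_ham V P' (Hbar P')) -> Rbar_lt (P_crit Hbar) (Finite P) ->
  0 < P /\ (forall x, V x < Hbar P) /\ RInt (pplus V (Hbar P)) (-1/2) (1/2) = P.
Proof.
  intros [Hsm [Hper _]] Heff Hcrit.
  assert (HV : forall x, continuous V x) by (intros; apply smooth_continuous, Hsm).
  destruct (Glb_Rbar_lt_witness _ _ Hcrit) as [P1 [[HP1 Hmin] HP1P]].
  destruct (Glb_Rbar_lt_witness _ _ Hmin) as [y2 [[P2 ->] H21]].
  destruct (Heff P2) as [phi2 [Hp2 Hv2]].
  pose proof (visc_solution_potential_le V P2 (Hbar P2) phi2 HV Hp2 Hv2) as HV2.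
  assert (HV1 : forall x, V x < Hbar P1) by (intros x; specialize (HV2 x); lra).
  destruct (Heff P1) as [phi1 [Hp1 Hv1]].
  pose proof (visc_solution_RInt_pplus_le_abs V P1 (Hbar P1) phi1 HV Hper Hp1 Hv1 HV1) as L1.
  destruct (Heff P) as [phi [Hp Hv]].
  pose proof (visc_solution_abs_le_RInt_pplus V P (Hbar P) phi HV Hper Hp Hv) as U.
  rewrite Rabs_right in L1, U by lra.
  assert (Hc : Hbar P1 < Hbar P).
  { apply Rnot_le_lt. intros Hle.
    assert (RInt (pplus V (Hbar P)) (-1/2) (1/2) <= RInt (pplus V (Hbar P1)) (-1/2) (1/2)); [|lra].
    apply RInt_le; [lra | apply ex_RInt_cont; intros; apply pplus_continuous, HV
                        | apply ex_RInt_cont; intros; apply pplus_continuous, HV |].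
    intros x _. apply sqrt_le_1_alt. lra. }
  assert (HVP : forall x, V x < Hbar P) by (intros x; specialize (HV1 x); lra).
  pose proof (visc_solution_RInt_pplus_le_abs V P (Hbar P) phi HV Hper Hp Hv HVP) as L.
  rewrite Rabs_right in L by lra.
  repeat split; auto; lra.
Qed.

Definition trunc_series (c : nat -> R) (h : R) (n : nat) : R := psum (fun j => h ^ j * c j) n.

Lemma trunc_series_S c h n : trunc_series c h (S n) = trunc_series c h n + h ^ n * c n.
Proof. reflexivity. Qed.

Lemma trunc_series_1 c h : trunc_series c h 1 = c O.
Proof. unfold trunc_series; simpl; ring. Qed.

Section RiccatiResidual.

Variables (a b H : nat -> R) (V0 h : R).

(* The order-j coefficient of -h/2 W' + W^2/2 + V0 for W = sum_j h^j a_j and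
   W' = sum_j h^j b_j; all terms of order <= N cancel against H_j, leaving the
   order-(N+1) part of h W' and the products a_i a_k with i, k <= N < i + k. *)
Lemma riccati_residual_eq N :
  1/2 * a O ^ 2 + V0 = H O ->
  (forall j, (1 <= j <= N)%nat ->
     - 1/2 * b (j - 1)%nat + a O * a j + 1/2 * psum (fun k => a (S k) * a (j - S k)%nat) (j - 1) = H j) ->
  - h / 2 * trunc_series b h (S N) + 1/2 * trunc_series a h (S N) ^ 2 + V0 - trunc_series H h (S N)
  = - h ^ S N * b N / 2
    + 1/2 * psum (fun k => h ^ S k * a (S k) * (trunc_series a h (S N) - trunc_series a h (N - k))) N.
Proof.
  intros H0 HJ. induction N as [|N IH].
  - rewrite trunc_series_1. unfold trunc_series; simpl. rewrite <- H0. field.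
  - specialize (IH (fun j Hj => HJ j ltac:(lia))).
    specialize (HJ (S N) ltac:(lia)). replace (S N - 1)%nat with N in HJ by lia.
    set (W := trunc_series a h) in *.
    set (T := psum (fun k => h ^ S k * a (S k)) N).
    set (X := psum (fun k => a (S k) * a (S N - S k)%nat) N) in HJ.
    set (R0 := psum (fun k => h ^ S k * a (S k) * (W (S N) - W (N - k)%nat)) N) in IH.
    assert (EW : W (S N) = a O + T) by (unfold W, T, trunc_series; rewrite psum_shift; simpl; ring).
    assert (ER : psum (fun k => h ^ S k * a (S k) * (W (S (S N)) - W (S N - k)%nat)) (S N)
       = R0 + h ^ S N * a (S N) * T - h ^ S N * X + h ^ S N * a (S N) * (W (S (S N)) - a O)).
    { cbn [psum]. replace (S N - N)%nat with 1%nat by lia.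
      replace (W 1%nat) with (a O) by (symmetry; apply trunc_series_1).
      f_equal. unfold R0, T, X. rewrite <- !psum_scal, <- psum_plus, <- psum_minus.
      apply psum_ext. intros k Hk. unfold W.
      replace (S N - k)%nat with (S (N - k)) by lia. rewrite !trunc_series_S.
      replace (S N - S k)%nat with (N - k)%nat by lia.
      replace (h ^ S N) with (h ^ S k * h ^ (N - k)) by (rewrite <- pow_add; f_equal; lia).
      ring. }
    rewrite ER. clear ER.
    change (W (S (S N))) with (W (S N) + h ^ S N * a (S N)).
    rewrite (trunc_series_S b h (S N)), (trunc_series_S H h (S N)), <- HJ.
    replace R0 with (2 * (- h / 2 * trunc_series b h (S N) + 1/2 * W (S N) ^ 2 + V0
                          - trunc_series H h (S N)) + h ^ S N * b N) by (rewrite IH; field).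
    rewrite EW. change (h ^ S (S N)) with (h * h ^ S N). simpl pow. field.
Qed.

Lemma trunc_series_diff_le n A : 0 < h <= 1 -> (forall j, (j < n)%nat -> Rabs (a j) <= A) ->
  forall d m, (m + d <= n)%nat ->
  Rabs (trunc_series a h (m + d) - trunc_series a h m) <= INR d * (h ^ m * A).
Proof.
  intros Hh HA d. induction d as [|d IH]; intros m Hmd.
  - rewrite Nat.add_0_r, Rminus_diag, Rabs_R0. simpl; lra.
  - rewrite Nat.add_succ_r, trunc_series_S, S_INR.
    replace (trunc_series a h (m + d) + h ^ (m + d) * a (m + d)%nat - trunc_series a h m)
      with ((trunc_series a h (m + d) - trunc_series a h m) + h ^ (m + d) * a (m + d)%nat) by ring.
    eapply Rle_trans; [apply Rabs_triang|].
    assert (H1 := IH m ltac:(lia)).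
    assert (Hhm : 0 < h ^ m) by (apply pow_lt; lra).
    assert (Hhd : h ^ (m + d) <= h ^ m).
    { rewrite pow_add. pose proof (pow_le h d ltac:(lra)).
      assert (h ^ d <= 1) by (rewrite <- (pow1 d); apply pow_incr; lra). nra. }
    rewrite Rabs_mult, (Rabs_right (h ^ (m + d))) by (apply Rle_ge, pow_le; lra).
    assert (Ha : Rabs (a (m + d)%nat) <= A) by (apply HA; lia).
    pose proof (Rabs_pos (a (m + d)%nat)). pose proof (pow_le h (m + d) ltac:(lra)). nra.
Qed.

Lemma riccati_residual_le N A B : 0 < h <= 1 ->
  (forall j, (j <= N)%nat -> Rabs (a j) <= A) -> Rabs (b N) <= B ->
  Rabs (- h ^ S N * b N / 2
        + 1/2 * psum (fun k => h ^ S k * a (S k) * (trunc_series a h (S N) - trunc_series a h (N - k))) N)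
  <= h ^ S N * (B + INR N * INR N * A * A).
Proof.
  intros Hh HA HB.
  assert (HA0 : 0 <= A) by (eapply Rle_trans; [apply Rabs_pos | apply (HA O); lia]).
  assert (HhN : 0 < h ^ S N) by (apply pow_lt; lra).
  assert (HS : Rabs (psum (fun k => h ^ S k * a (S k) * (trunc_series a h (S N) - trunc_series a h (N - k))) N)
               <= INR N * (INR N * A * A * h ^ S N)).
  { apply psum_abs_le. intros k Hk.
    pose proof (trunc_series_diff_le (S N) A Hh ltac:(intros j Hj; apply HA; lia) (S k) (N - k) ltac:(lia)) as D.
    replace (N - k + S k)%nat with (S N) in D by lia.
    rewrite !Rabs_mult, (Rabs_right (h ^ S k)) by (apply Rle_ge, pow_le; lra).
    assert (Hak : Rabs (a (S k)) <= A) by (apply HA; lia).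
    assert (Hpow : h ^ S k * h ^ (N - k) = h ^ S N) by (rewrite <- pow_add; f_equal; lia).
    assert (Hk2 : INR (S k) <= INR N) by (apply le_INR; lia).
    pose proof (pow_lt h (S k) ltac:(lra)). pose proof (pow_lt h (N - k) ltac:(lra)).
    pose proof (Rabs_pos (a (S k))).
    pose proof (Rabs_pos (trunc_series a h (S N) - trunc_series a h (N - k))).
    assert (h ^ S k * Rabs (a (S k)) * Rabs (trunc_series a h (S N) - trunc_series a h (N - k))
            <= h ^ S k * A * (INR (S k) * (h ^ (N - k) * A)))
      by (apply Rmult_le_compat; nra).
    assert (INR (S k) * (A * A * h ^ S N) <= INR N * (A * A * h ^ S N))
      by (apply Rmult_le_compat_r; [pose proof (Rle_0_sqr A); unfold Rsqr in *; nra | exact Hk2]).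
    rewrite <- Hpow in *. nra. }
  assert (HB0 : 0 <= B) by (eapply Rle_trans; [apply Rabs_pos | exact HB]).
  assert (0 <= INR N * INR N * A * A)
    by (pose proof (pos_INR N); apply Rmult_le_pos; [apply Rmult_le_pos; [apply Rmult_le_pos|]|]; lra).
  assert (0 <= INR N * INR N * A * A * h ^ S N) by (apply Rmult_le_pos; lra).
  apply Rabs_le_between in HB. apply Rabs_le_between in HS. apply Rabs_le_between.
  assert (h ^ S N * b N <= h ^ S N * B) by (apply Rmult_le_compat_l; lra).
  assert (h ^ S N * - B <= h ^ S N * b N) by (apply Rmult_le_compat_l; lra).
  split; nra.
Qed.

End RiccatiResidual.

Lemma uniform_bound_upto (g : nat -> R -> R) n :
  (forall j, exists A, forall x, Rabs (g j x) <= A) ->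
  exists A, forall j x, (j <= n)%nat -> Rabs (g j x) <= A.
Proof.
  intros Hg. induction n as [|n [A HA]].
  - destruct (Hg O) as [A HA]. exists A. intros j x Hj. replace j with O by lia. apply HA.
  - destruct (Hg (S n)) as [A1 HA1]. exists (Rmax A A1). intros j x Hj.
    destruct (Nat.eq_dec j (S n)) as [-> | Hne].
    + eapply Rle_trans; [apply HA1 | apply Rmax_r].
    + eapply Rle_trans; [apply HA; lia | apply Rmax_l].
Qed.

Lemma trunc_series_near_head (c : nat -> R) h N A : 0 < h <= 1 ->
  (forall j, (j <= N)%nat -> Rabs (c j) <= A) ->
  Rabs (trunc_series c h (S N) - c O) <= INR N * h * A.
Proof.
  intros Hh HA.
  pose proof (trunc_series_diff_le c h (S N) A Hh ltac:(intros j Hj; apply HA; lia) N 1 ltac:(lia)) as D.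
  rewrite trunc_series_1, pow_1 in D. rewrite <- Rmult_assoc in D. exact D.
Qed.

Lemma smooth_twice_diff (f : R -> R) : smooth f -> twice_diff f /\ forall x, continuous (Derive_n f 2) x.
Proof.
  intros Hf. split; [intros x; split; [exact (Hf 1%nat x) | exact (Hf 2%nat x)] |].
  intros x. apply (@ex_derive_continuous R_AbsRing R_NormedModule), (Hf 3%nat x).
Qed.

Lemma pplus_is_derive (V : R -> R) c x : smooth V -> V x < c ->
  is_derive (pplus V c) x (- Derive V x / pplus V c x).
Proof.
  intros HV Hx. pose proof (pplus_pos V c x Hx) as Hp. unfold pplus in *.
  auto_derive; [repeat split; [exact (HV 1%nat x) | lra] |].
  replace (c + - V x) with (c - V x) by ring. change (Derive (fun y => V y) x) with (Derive V x).
  field. lra.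
Qed.

Lemma pplus_Derive_continuous (V : R -> R) c x : smooth V -> V x < c ->
  continuous (fun y => - Derive V y / pplus V c y) x.
Proof.
  intros HV Hx. pose proof (pplus_pos V c x Hx) as Hp. unfold pplus in *.
  apply (@ex_derive_continuous R_AbsRing R_NormedModule). auto_derive.
  replace (c + - V x) with (c - V x) by ring.
  repeat split; [exact (HV 2%nat x) | exact (HV 1%nat x) | lra | lra].
Qed.

(* v_0 is the primitive of p^+ - P; it is periodic exactly because the mean of p^+ is P. *)
Lemma expansion_v0_regular (V : R -> R) P c (v0 : R -> R) :
  smooth V -> periodic1 V -> (forall x, V x < c) -> RInt (pplus V c) (-1/2) (1/2) = P ->
  (forall x, v0 x = RInt (pplus V c) (-1/2) x - P * (x + 1/2)) ->
  periodic1 v0 /\ twice_diff v0 /\ (forall x, continuous (Derive_n v0 2) x) /\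
  (forall x, Derive v0 x = pplus V c x - P).
Proof.
  intros HV HVp Hc HIp Hv0.
  set (p := pplus V c) in *. set (dp := fun y => - Derive V y / p y).
  assert (Hpd : forall x, is_derive p x (dp x)) by (intros; apply pplus_is_derive; auto).
  assert (Hpc : forall x, continuous p x) by (intros; apply pplus_continuous; intros; apply smooth_continuous, HV).
  assert (Hd1 : forall x, is_derive v0 x (p x - P)).
  { intros x. apply (is_derive_ext (fun y => RInt p (-1/2) y - P * (y + 1/2))); [intros; auto|].
    apply (is_derive_minus (fun y => RInt p (-1/2) y) (fun y => P * (y + 1/2)) x (p x) P).
    - apply is_derive_RInt_upper, Hpc.
    - auto_derive; [auto | ring]. }
  assert (D1 : forall x, Derive v0 x = p x - P) by (intros; apply is_derive_unique, Hd1).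
  assert (Hd2 : forall x, is_derive (Derive v0) x (dp x)).
  { intros x. apply (is_derive_ext (fun y => p y - P)); [intros; auto|].
    replace (dp x) with (dp x - 0) by ring.
    apply (is_derive_minus p (fun _ => P)); [apply Hpd | apply (@is_derive_const R_AbsRing R_NormedModule)]. }
  assert (D2 : forall x, Derive_n v0 2 x = dp x) by (intros; apply is_derive_unique, Hd2).
  repeat split; auto.
  - intros x. rewrite !Hv0, RInt_upper_add_period, HIp by (auto; apply pplus_periodic, HVp). ring.
  - exists (p x - P); apply Hd1.
  - exists (dp x); apply Hd2.
  - intros x. apply (continuous_ext dp); [intros; rewrite D2; auto |].
    apply pplus_Derive_continuous; auto.
Qed.

Lemma expansion_profiles_regular (V : R -> R) P c Hj (v : nat -> R -> R) :
  smooth V -> periodic1 V -> (forall x, V x < c) -> RInt (pplus V c) (-1/2) (1/2) = P ->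
  expansion_data V P c Hj v ->
  forall j, periodic1 (v j) /\ twice_diff (v j) /\ forall x, continuous (Derive_n (v j) 2) x.
Proof.
  intros HV HVp Hc HIp [_ [Hv0 Hexp]] [|j].
  - destruct (expansion_v0_regular V P c (v O)) as [? [? [? _]]]; auto.
  - destruct (Hexp (S j) ltac:(lia)) as [_ [Hs [Hp _]]]. split; [exact Hp | apply smooth_twice_diff, Hs].
Qed.

(* The coefficient of h^j in P + sum_j h^j v_j'(x). *)
Definition grad_coeff (P : R) (v : nat -> R -> R) (j : nat) (x : R) : R :=
  match j with O => P + Derive (v O) x | S _ => Derive (v j) x end.

Lemma expansion_coeff_eqs (V : R -> R) P c Hj (v : nat -> R -> R) x :
  V x <= c -> Derive (v O) x = pplus V c x - P -> expansion_data V P c Hj v ->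
  1/2 * grad_coeff P v O x ^ 2 + V x = Hj O /\
  forall j, (1 <= j)%nat ->
    - 1/2 * Derive_n (v (j - 1)%nat) 2 x + grad_coeff P v O x * grad_coeff P v j x
    + 1/2 * psum (fun k => grad_coeff P v (S k) x * grad_coeff P v (j - S k)%nat x) (j - 1) = Hj j.
Proof.
  intros Hc D0 [H0 [_ Hexp]].
  assert (Hg0 : grad_coeff P v O x = pplus V c x) by (simpl; rewrite D0; ring).
  split.
  - rewrite Hg0, pplus_sqr, H0 by exact Hc. field.
  - intros [|j] Hj1; [lia|].
    destruct (Hexp (S j) Hj1) as [_ [_ [_ Heq]]]. rewrite <- (Heq x), Hg0.
    f_equal. f_equal. unfold cross_sum. rewrite fold_right_seq_psum.
    apply psum_ext. intros k Hk. unfold grad_coeff. replace (S j - S k)%nat with (S (j - S k)) by lia.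
    replace (S j - (1 + k))%nat with (S (j - S k)) by lia. reflexivity.
Qed.

Lemma trunc_series_grad_coeff P v h N x :
  trunc_series (fun j => grad_coeff P v j x) h (S N) = P + trunc_series (fun j => Derive (v j) x) h (S N).
Proof. unfold trunc_series. rewrite !psum_shift. simpl. ring. Qed.

Definition approx_corrector (v : nat -> R -> R) (h : R) (N : nat) (x : R) : R :=
  trunc_series (fun j => v j x) h (S N).

Lemma approx_corrector_periodic v h N : (forall j, periodic1 (v j)) -> periodic1 (approx_corrector v h N).
Proof. intros Hp x. apply psum_ext. intros k _. rewrite Hp. reflexivity. Qed.

Lemma is_derive_trunc_series (f df : nat -> R -> R) h n x : (forall j, is_derive (f j) x (df j x)) ->
  is_derive (fun y => trunc_series (fun j => f j y) h n) x (trunc_series (fun j => df j x) h n).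
Proof. intros Hf. apply is_derive_psum. intros j. apply is_derive_scal, Hf. Qed.

Lemma approx_corrector_derivatives v h N : (forall j, twice_diff (v j)) ->
  twice_diff (approx_corrector v h N) /\
  (forall x, Derive (approx_corrector v h N) x = trunc_series (fun j => Derive (v j) x) h (S N)) /\
  (forall x, Derive_n (approx_corrector v h N) 2 x = trunc_series (fun j => Derive_n (v j) 2 x) h (S N)).
Proof.
  intros Hv.
  assert (Hd1 : forall x, is_derive (approx_corrector v h N) x (trunc_series (fun j => Derive (v j) x) h (S N)))
    by (intros x; exact (is_derive_trunc_series v (fun j => Derive (v j)) h (S N) x
                           (fun j => Derive_correct _ _ (proj1 (Hv j x))))).
  assert (D1 : forall x, Derive (approx_corrector v h N) x = trunc_series (fun j => Derive (v j) x) h (S N))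
    by (intros; apply is_derive_unique, Hd1).
  assert (Hd2 : forall x, is_derive (Derive (approx_corrector v h N)) x
                                    (trunc_series (fun j => Derive_n (v j) 2 x) h (S N))).
  { intros x. apply (is_derive_ext (fun y => trunc_series (fun j => Derive (v j) y) h (S N))); [intros; auto|].
    exact (is_derive_trunc_series (fun j => Derive (v j)) (fun j => Derive_n (v j) 2) h (S N) x
             (fun j => twice_diff_is_derive _ x (Hv j))). }
  repeat split; auto.
  - exists (trunc_series (fun j => Derive (v j) x) h (S N)); apply Hd1.
  - exists (trunc_series (fun j => Derive_n (v j) 2 x) h (S N)); apply Hd2.
  - intros x; apply is_derive_unique, Hd2.
Qed.

Lemma approx_corrector_residual_le (V : R -> R) P c Hj v N h A B x :
  0 < h <= 1 -> V x <= c -> Derive (v O) x = pplus V c x - P -> expansion_data V P c Hj v ->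
  (forall j, twice_diff (v j)) ->
  (forall j, (j <= N)%nat -> Rabs (grad_coeff P v j x) <= A) -> Rabs (Derive_n (v N) 2 x) <= B ->
  Rabs (- h / 2 * Derive_n (approx_corrector v h N) 2 x
        + 1/2 * (P + Derive (approx_corrector v h N) x) ^ 2 + V x - Hhat Hj h N)
  <= (B + INR N * INR N * A * A) * h ^ S N.
Proof.
  intros Hh Hc D0 Hexp Hv HA HB.
  destruct (approx_corrector_derivatives v h N Hv) as [_ [D1 D2]].
  destruct (expansion_coeff_eqs V P c Hj v x Hc D0 Hexp) as [E0 EJ].
  rewrite D1, D2, <- (trunc_series_grad_coeff P v h N x). unfold Hhat. rewrite sum_f_R0_psum.
  change (psum (fun j => h ^ j * Hj j) (S N)) with (trunc_series Hj h (S N)).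
  rewrite (riccati_residual_eq (fun j => grad_coeff P v j x) (fun j => Derive_n (v j) 2 x) Hj (V x) h N E0)
    by (intros j Hj1; apply EJ; lia).
  rewrite (Rmult_comm _ (h ^ S N)).
  exact (riccati_residual_le (fun j => grad_coeff P v j x) (fun j => Derive_n (v j) 2 x) h N A B Hh HA HB).
Qed.

Lemma mul_lt_of_lt_div h L e : 0 <= L -> 0 < h < e / (L + 1) -> h * L < e.
Proof.
  intros HL [Hh He]. apply (Rmult_lt_compat_r (L + 1)) in He; [|lra].
  unfold Rdiv in He. rewrite Rmult_assoc, Rinv_l, Rmult_1_r in He by lra. nra.
Qed.

(* For small h, P + U' is close to p^+ > 0 and Hhat close to Hbar > max V. *)
Lemma approx_corrector_expansion (V : R -> R) P c Hj v N :
  smooth V -> periodic1 V -> (forall x, V x < c) -> RInt (pplus V c) (-1/2) (1/2) = P ->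
  expansion_data V P c Hj v ->
  exists M delta, 0 < delta /\ forall h, 0 < h < delta ->
    let U := approx_corrector v h N in
    periodic1 U /\ twice_diff U /\ (forall x, 0 < P + Derive U x) /\ (forall x, V x < Hhat Hj h N) /\
    forall x, Rabs (- h / 2 * Derive_n U 2 x + 1/2 * (P + Derive U x) ^ 2 + V x - Hhat Hj h N)
              <= M * h ^ S N.
Proof.
  intros HV HVp Hc HIp Hexp.
  pose proof (expansion_profiles_regular V P c Hj v HV HVp Hc HIp Hexp) as Hreg.
  pose proof Hexp as [H0 [Hv0 _]].
  destruct (expansion_v0_regular V P c (v O) HV HVp Hc HIp Hv0) as [_ [_ [_ D0]]].
  assert (Hdv : forall j x, continuous (Derive (v j)) x)
    by (intros j x; apply (is_derive_continuous _ x _ (twice_diff_is_derive _ x (proj1 (proj2 (Hreg j)))))).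
  destruct (uniform_bound_upto (grad_coeff P v) N) as [A HA].
  { intros j. destruct (periodic_bounded (grad_coeff P v j)) as [A [_ HA]]; [| |exists A; exact HA].
    - intros x; destruct j; simpl; rewrite periodic_Derive by apply Hreg; reflexivity.
    - intros x; destruct j; [apply (continuous_plus (fun _ => P)); [apply continuous_const |] |]; apply Hdv. }
  destruct (periodic_bounded (Derive_n (v N) 2)) as [B [_ HB]]; [| apply Hreg |].
  { apply periodic_Derive, periodic_Derive, Hreg. }
  destruct (uniform_bound_upto (fun j (_ : R) => Hj j) N) as [K HK].
  { intros j. exists (Rabs (Hj j)). intros; lra. }
  assert (HA0 : 0 <= A) by (eapply Rle_trans; [apply Rabs_pos | apply (HA O 0); lia]).
  assert (HK0 : 0 <= K) by (eapply Rle_trans; [apply Rabs_pos | apply (HK O 0); lia]).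
  destruct (periodic_attains_min (pplus V c)) as [xm Hxm].
  { apply pplus_periodic, HVp. }
  { intros; apply pplus_continuous; intros; apply smooth_continuous, HV. }
  destruct (periodic_attains_max V HVp) as [xV HxV]; [intros; apply smooth_continuous, HV|].
  pose proof (pplus_pos V c xm (Hc xm)) as Hpm. pose proof (Hc xV) as HVmax.
  set (pm := pplus V c xm) in *. set (gam := c - V xV).
  exists (B + INR N * INR N * A * A), (Rmin 1 (Rmin (pm / (INR N * A + 1)) (gam / (INR N * K + 1)))).
  assert (HNA : 0 <= INR N * A) by (apply Rmult_le_pos; [apply pos_INR | exact HA0]).
  assert (HNK : 0 <= INR N * K) by (apply Rmult_le_pos; [apply pos_INR | exact HK0]).
  split.
  { repeat apply Rmin_glb_lt; try apply Rdiv_lt_0_compat; unfold gam; lra. }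
  intros h [Hh Hhd] U.
  apply Rmin_Rgt in Hhd. destruct Hhd as [Hh1 Hhd]. apply Rmin_Rgt in Hhd. destruct Hhd as [HhA HhK].
  pose proof (mul_lt_of_lt_div h (INR N * A) pm HNA ltac:(lra)) as HsmallA.
  pose proof (mul_lt_of_lt_div h (INR N * K) gam HNK ltac:(lra)) as HsmallK.
  destruct (approx_corrector_derivatives v h N (fun j => proj1 (proj2 (Hreg j)))) as [HUd [D1 _]].
  split; [| split; [| split; [| split]]].
  - apply approx_corrector_periodic. intros; apply Hreg.
  - exact HUd.
  - intros x. unfold U. rewrite D1, <- (trunc_series_grad_coeff P v h N x).
    pose proof (trunc_series_near_head (fun j => grad_coeff P v j x) h N A ltac:(lra)
                  (fun j Hj => HA j x Hj)) as Hnear.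
    cbv beta in Hnear. change (grad_coeff P v O x) with (P + Derive (v O) x) in Hnear. rewrite D0 in Hnear.
    apply Rabs_le_between in Hnear. specialize (Hxm x). lra.
  - intros x. unfold Hhat. rewrite sum_f_R0_psum.
    pose proof (trunc_series_near_head Hj h N K ltac:(lra) (fun j Hj => HK j 0 Hj)) as Hnear.
    apply Rabs_le_between in Hnear. unfold trunc_series in Hnear. specialize (HxV x). unfold gam in HsmallK.
    lra.
  - intros x. apply (approx_corrector_residual_le V P c); auto; [lra | apply Rlt_le, Hc | intros; apply Hreg].
Qed.

Theorem mainTheorem3
  (V : R -> R) (Hbar : R -> R) (Hh : R -> R) (P : R)
  (Hj : nat -> R) (v : nat -> R -> R) :
  admissible_potential V ->
  (forall P' : R, is_eff_ham V P' (Hbar P')) ->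
  Rbar_lt (P_crit Hbar) (Finite P) ->
  (forall h : R, h > 0 -> is_visc_eff_ham V P h (Hh h)) ->
  expansion_data V P (Hbar P) Hj v ->
  forall N : nat, exists C delta : R, delta > 0 /\
    forall h : R, 0 < h < delta ->
      Rabs (Hh h - Hhat Hj h N) <= C * h ^ (N + 1).
Proof.
  intros Hadm Heff Hcrit Hvisc Hexp N.
  destruct (supercritical_eff_ham V Hbar P Hadm Heff Hcrit) as [HP [HVc HIp]].
  destruct Hadm as [HVs [HVp _]].
  destruct (approx_corrector_expansion V P (Hbar P) Hj v N HVs HVp HVc HIp Hexp)
    as [M [delta [Hdelta Happ]]].
  exists M, delta. split; [lra|]. intros h Hhd.
  destruct (Happ h Hhd) as [HUp [HUd [HUpos [HVH HUres]]]].
  destruct (Hvisc h ltac:(lra)) as [vh [Hvhp [Hvhd Hvheq]]].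
  rewrite Nat.add_1_r.
  apply (eff_ham_comparison V P h (Hh h) (Hhat Hj h N) (M * h ^ S N) vh (approx_corrector v h N)); auto; lra.
Qed.
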